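(* For every constant $\epsilon>0$, no deterministic online algorithm is $(\frac12+\epsilon)$-competitive for the maximum-weight online bipartite left-perfect matching problem under vertex arrivals with hard budget $k=4$, even when all edge weights are in $\{0,1\}$. That is, for every deterministic online algorithm for this problem and every constant $c\ge0$, there is an instance with all edge weights in $\{0,1\}$ on which the weight of the algorithm's final left-perfect matching is strictly less than $(\frac12+\epsilon)\cdot\mathsf{OPT}-c$, where $\mathsf{OPT}$ is the maximum weight of a left-perfect matching of $G$.
   Context: Problem: $G=(L\cup R,E)$ is a complete bipartite graph with $|L|\le|R|$ and nonnegative edge weights $w$. The algorithm initially knows $R$ (and $k=4$). Over $|L|$ timesteps the vertices of $L$ arrive one at a time, together with all incident edges and their weights. At the end of each timestep the algorithm must output a left-perfect matching of the revealed graph (every arrived vertex of $L$ matched). The new matching $M_2$ must be obtainable from the previous one $M_1$ (empty before the first timestep) by at most $4$ (re)assignments, the number of (re)assignments being the number of vertices of nonzero degree in $M_1\triangle M_2$; once a vertex is matched it must remain matched afterwards. An algorithm is $\alpha$-competitive if there is a constant $c\ge0$ such that on every instance the weight of its final matching is at least $\alpha\cdot\mathsf{OPT}-c$. *)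

From HB Require Import structures.
From mathcomp Require Import all_boot all_order all_algebra.
From mathcomp Require Import reals.
Set Implicit Arguments. Unset Strict Implicit. Unset Printing Implicit Defensive.
Import Order.TTheory GRing.Theory Num.Theory.
Local Open Scope ring_scope.

(* Conventions.
   - The right side R of the bipartite graph is 'I_m (m = |R|), known upfront.
   - The left vertex arriving at timestep i (0-based) is identified with i; it
     is revealed together with its weight vector  w_i : 'I_m -> R  (the graph is
     complete bipartite, so a weight vector describes all incident edges).
   - A left-perfect matching of the revealed graph after t arrivals is a
     sequence s : seq 'I_m with size s = t and uniq s (left vertex i is matched
     to right vertex s`_i).
   - A deterministic online algorithm maps m and the sequence of revealed
     weight vectors to its current matching. *)

Definition online_alg (R : realType) :=
  forall m : nat, seq ('I_m -> R) -> seq 'I_m.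

Definition medges m (s : seq 'I_m) : seq (nat * 'I_m) := zip (iota 0 (size s)) s.

Definition edge_vertices m (E : seq (nat * 'I_m)) : seq (nat + 'I_m) :=
  [seq inl e.1 | e <- E] ++ [seq inr e.2 | e <- E].

(* number of (re)assignments = number of vertices of nonzero degree in the
   symmetric difference M1 (+) M2 of the two matchings *)
Definition num_reassign m (s1 s2 : seq 'I_m) : nat :=
  let E1 := medges s1 in let E2 := medges s2 in
  let D := [seq e <- E1 | e \notin E2] ++ [seq e <- E2 | e \notin E1] in
  size (undup (edge_vertices D)).

Definition left_perfect m (t : nat) (s : seq 'I_m) : bool :=
  (size s == t) && uniq s.

(* a legal update with budget k: at most k (re)assignments, and every right
   vertex matched in M1 stays matched in M2 (left vertices stay matched by
   left-perfectness) *)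
Definition legal_update (k : nat) m (s1 s2 : seq 'I_m) : Prop :=
  (num_reassign s1 s2 <= k)%N /\ (forall r, r \in s1 -> r \in s2).

Definition valid_alg (R : realType) (k : nat) (A : online_alg R) : Prop :=
  forall (m : nat) (ws : seq ('I_m -> R)),
    (size ws <= m)%N ->
    (forall i r, (i < size ws)%N -> 0 <= nth (fun _ => 0) ws i r) ->
    left_perfect (size ws) (A m ws) /\
    (forall ws' w, ws = rcons ws' w -> legal_update k (A m ws') (A m ws)).

Definition mweight (R : realType) m (ws : seq ('I_m -> R)) (s : seq 'I_m) : R :=
  \sum_(p <- zip ws s) p.1 p.2.

Definition OPT (R : realType) m (ws : seq ('I_m -> R)) : R :=
  \big[Num.max/0]_(f : {ffun 'I_(size ws) -> 'I_m} | injectiveb f)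
     \sum_(i < size ws) (nth (fun _ => 0) ws i) (f i).

Definition zero_one_weights (R : realType) m (ws : seq ('I_m -> R)) : Prop :=
  forall i r, (i < size ws)%N ->
    nth (fun _ => 0) ws i r = 0 \/ nth (fun _ => 0) ws i r = 1.

From HB Require Import structures.
From mathcomp Require Import all_boot all_order all_algebra.
From mathcomp Require Import reals.
From mathcomp Require Import zify.
From mathcomp.algebra_tactics Require Import lra.
Import Order.TTheory GRing.Theory Num.Theory.
Local Open Scope ring_scope.
Set Implicit Arguments. Unset Strict Implicit. Unset Printing Implicit Defensive.

(* With budget at most 5, an arrival can never move an already matched left
   vertex onto a right vertex that was matched before: the displaced owner and
   the new left vertex would also have to be rematched, giving six reassigned
   vertices.  Hence a left vertex can end on a right vertex matched before its
   arrival only if it took it at once.  The adversary offers each pair of left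
   vertices just the two right vertices newly matched during the previous two
   arrivals, and then offers the second vertex of the pair only the one its
   partner took.  At most one vertex per pair ends on a weight-one edge, while
   the optimum uses both, so on 2N+2 arrivals ALG <= N and OPT >= 2N. *)

Lemma medgesP m (s : seq 'I_m) i r :
  reflect (i < size s /\ nth r s i = r)%N ((i, r) \in medges s).
Proof.
rewrite /medges; apply: (iffP (nthP (0%N, r))).
  case=> j; rewrite size_zip size_iota minnn => js.
  rewrite nth_zip ?size_iota // nth_iota // add0n => -[<- <-].
  by split=> //; apply: set_nth_default.
move=> [lt_is nth_r]; exists i; first by rewrite size_zip size_iota minnn.
by rewrite nth_zip ?size_iota // nth_iota // add0n nth_r.
Qed.

Definition reassigned m (s1 s2 : seq 'I_m) : seq (nat + 'I_m) :=
  undup (edge_vertices ([seq e <- medges s1 | e \notin medges s2] ++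
                        [seq e <- medges s2 | e \notin medges s1])).

Lemma num_reassignE m (s1 s2 : seq 'I_m) :
  num_reassign s1 s2 = size (reassigned s1 s2).
Proof. by []. Qed.

Lemma new_edge_reassigned m (s1 s2 : seq 'I_m) e :
  e \in medges s2 -> e \notin medges s1 ->
  (inl e.1 \in reassigned s1 s2) && (inr e.2 \in reassigned s1 s2).
Proof.
move=> e2 e1; rewrite !mem_undup !mem_cat.
have eD : e \in [seq e <- medges s1 | e \notin medges s2] ++
                [seq e <- medges s2 | e \notin medges s1].
  by rewrite mem_cat orbC mem_filter e1 e2.
by rewrite (map_f (fun e => inl e.1) eD) (map_f (fun e => inr e.2) eD) orbT.
Qed.

(* Moving i onto a vertex a already matched in s1 forces the old owner j of a
   to move as well, and the new left vertex t gets matched: the three new edges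
   have six distinct endpoints. *)
Lemma six_le_num_reassign m (d : 'I_m) (s1 s2 : seq 'I_m) i :
  size s2 = (size s1).+1 -> uniq s2 -> (i < size s1)%N ->
  nth d s2 i != nth d s1 i -> nth d s2 i \in s1 -> (6 <= num_reassign s1 s2)%N.
Proof.
move=> size_s2 uniq_s2 lt_i_s1 moved matched.
set t := size s1 in size_s2 lt_i_s1; set a := nth d s2 i in moved matched.
set j := index a s1; set b := nth d s2 j; set c := nth d s2 t.
have lt_j_s1 : (j < t)%N by rewrite index_mem.
have s1j : nth d s1 j = a by rewrite nth_index.
have neq_ij : i != j by apply: contraNneq moved => ->; rewrite s1j.
have lt_i_t1 : (i < t.+1)%N := ltnW lt_i_s1.
have lt_j_t1 : (j < t.+1)%N := ltnW lt_j_s1.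
have neq_it : i != t by rewrite ltn_eqF.
have neq_jt : j != t by rewrite ltn_eqF.
have neq_s2 x y : (x < t.+1)%N -> (y < t.+1)%N -> x != y -> nth d s2 x != nth d s2 y.
  by move=> ltx lty; rewrite nth_uniq ?size_s2.
have neq_ab : a != b := neq_s2 i j lt_i_t1 lt_j_t1 neq_ij.
have neq_ac : a != c := neq_s2 i t lt_i_t1 (ltnSn t) neq_it.
have neq_bc : b != c := neq_s2 j t lt_j_t1 (ltnSn t) neq_jt.
have in_s2 x : (x < t.+1)%N -> (x, nth d s2 x) \in medges s2.
  by move=> ltx; apply/medgesP; rewrite size_s2 (set_nth_default d) ?size_s2.
have /andP[Vi Va] : (inl i \in reassigned s1 s2) && (inr a \in reassigned s1 s2).
  apply: (new_edge_reassigned (e := (i, a))); first exact: in_s2.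
  apply/medgesP => -[_]; rewrite (set_nth_default d) // => s1i.
  by rewrite s1i eqxx in moved.
have /andP[Vj Vb] : (inl j \in reassigned s1 s2) && (inr b \in reassigned s1 s2).
  apply: (new_edge_reassigned (e := (j, b))); first exact: in_s2.
  apply/medgesP => -[_]; rewrite (set_nth_default d) // s1j => eq_ab.
  by rewrite eq_ab eqxx in neq_ab.
have /andP[Vt Vc] : (inl t \in reassigned s1 s2) && (inr c \in reassigned s1 s2).
  apply: (new_edge_reassigned (e := (t, c))); first exact: in_s2.
  by apply/medgesP => -[]; rewrite ltnn.
rewrite num_reassignE.
have -> : 6%N = size ([seq inl x | x <- [:: i; j; t]] ++ [seq inr y | y <- [:: a; b; c]]).
  by [].
apply: uniq_leq_size => [|x].
  rewrite cat_uniq (map_inj_uniq inl_inj) (map_inj_uniq inr_inj) /= !inE.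
  by rewrite !negb_or neq_ij neq_it neq_jt neq_ab neq_ac neq_bc.
by rewrite mem_cat => /orP[] /mapP[y]; rewrite !inE => /or3P[] /eqP -> ->.
Qed.

Lemma big_nat_pairs n (F : nat -> nat) :
  (\sum_(0 <= i < n.*2) F i = \sum_(0 <= j < n) (F j.*2 + F j.*2.+1))%N.
Proof.
elim: n => [|n IHn]; first by rewrite !big_geq.
by rewrite doubleS !big_nat_recr //= IHn addnA.
Qed.

Lemma mweightE (R : realType) m (d : 'I_m) (ws : seq ('I_m -> R)) (s : seq 'I_m) :
  size s = size ws ->
  mweight ws s = \sum_(i < size ws) nth (fun _ => 0) ws i (nth d s i).
Proof.
rewrite /mweight; elim: ws s => [|w ws IHws] [|r s] //=.
  by rewrite big_nil big_ord0.
by move=> [size_s]; rewrite big_cons big_ord_recl IHws.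
Qed.

Lemma le_OPT (R : realType) m (d : 'I_m) (ws : seq ('I_m -> R)) (s : seq 'I_m) :
  size s = size ws -> uniq s ->
  \sum_(i < size ws) nth (fun _ => 0) ws i (nth d s i) <= OPT ws.
Proof.
move=> size_s uniq_s; pose f := [ffun i : 'I_(size ws) => nth d s i].
have f_inj : injectiveb f.
  apply/injectiveP => i j; rewrite !ffunE => /eqP.
  by rewrite nth_uniq ?size_s // => /eqP /val_inj.
rewrite (eq_bigr (fun i : 'I_(size ws) => nth (fun _ => 0) ws i (f i))) => [|i _].
  exact: (le_bigmax_cond _ _ f_inj).
by rewrite ffunE.
Qed.

Section Adversary.

Variables (R : realType) (A : online_alg R) (m : nat) (d : 'I_m).

Definition new_vertex (M : nat -> seq 'I_m) (j : nat) : 'I_m :=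
  nth d [seq r <- M j.+1 | r \notin M j] 0.

(* After two dummy arrivals, left vertices come in pairs 2n+2, 2n+3. Both see
   only the right vertices a, b newly matched on the arrivals of 2n and 2n+1;
   the second one wants exactly the vertex its partner took on arrival (a if it
   took neither). *)
Definition demand (M : nat -> seq 'I_m) (t : nat) : pred 'I_m :=
  if t is t'.+2 then
    let a := new_vertex M t'./2.*2 in let b := new_vertex M t'./2.*2.+1 in
    if odd t' then pred1 (if nth d (M t) t'.+1 == b then b else a)
    else [pred r | (r == a) || (r == b)]
  else pred0.

Lemma eq_demand (M M' : nat -> seq 'I_m) t :
  (forall j, (j <= t)%N -> M j = M' j) -> demand M t =1 demand M' t.
Proof.
case: t => [|[|t]] // eqM r; rewrite /demand /new_vertex.
by rewrite !eqM //; case: (odd t); lia.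
Qed.

Lemma demand_even (M : nat -> seq 'I_m) n r :
  demand M n.*2.+2 r = (r == new_vertex M n.*2) || (r == new_vertex M n.*2.+1).
Proof. by rewrite /demand odd_double doubleK. Qed.

Lemma demand_odd (M : nat -> seq 'I_m) n r :
  demand M n.*2.+3 r =
  (r == if nth d (M n.*2.+3) n.*2.+2 == new_vertex M n.*2.+1
        then new_vertex M n.*2.+1 else new_vertex M n.*2).
Proof. by rewrite /demand /= odd_double uphalf_double. Qed.

Definition next_weight (ws : seq ('I_m -> R)) : 'I_m -> R :=
  fun r => (demand (fun j => A (take j ws)) (size ws) r)%:R.

Fixpoint adversary (t : nat) : seq ('I_m -> R) :=
  if t is t'.+1 then rcons (adversary t') (next_weight (adversary t')) else [::].

Definition alg_out (t : nat) : seq 'I_m := A (adversary t).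

Local Notation nv := (new_vertex alg_out).

Lemma size_adversary t : size (adversary t) = t.
Proof. by elim: t => //= t IHt; rewrite size_rcons IHt. Qed.

Lemma take_adversary j t : (j <= t)%N -> take j (adversary t) = adversary j.
Proof.
elim: t => [|t IHt]; first by rewrite leqn0 => /eqP ->.
rewrite leq_eqVlt => /orP[/eqP ->|]; first by rewrite take_oversize ?size_adversary.
by rewrite ltnS => le_jt /=; rewrite -cats1 takel_cat ?size_adversary // IHt.
Qed.

Lemma nth_adversary t i r : (i < t)%N ->
  nth (fun _ => 0) (adversary t) i r = (demand alg_out i r)%:R.
Proof.
elim: t => // t IHt; rewrite ltnS leq_eqVlt /= nth_rcons size_adversary.
case/orP=> [/eqP ->|lt_it]; last by rewrite lt_it IHt.
rewrite ltnn eqxx /next_weight size_adversary (eq_demand (M' := alg_out)) //.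
by move=> j le_jt; rewrite /alg_out take_adversary.
Qed.

Lemma adversary_ge0 t i r : 0 <= nth (fun _ => 0) (adversary t) i r.
Proof.
case: (ltnP i t) => [lt_it|le_ti]; first by rewrite nth_adversary.
by rewrite nth_default ?size_adversary.
Qed.

Lemma adversary_zero_one t : zero_one_weights (adversary t).
Proof.
move=> i r; rewrite size_adversary => lt_it; rewrite nth_adversary //.
by case: (demand _ _ _); [right | left].
Qed.

Variable k : nat.
Hypotheses (k_lt6 : (k < 6)%N) (A_valid : valid_alg k A).

Lemma alg_out_left_perfect t : (t <= m)%N -> size (alg_out t) = t /\ uniq (alg_out t).
Proof.
move=> le_tm; have [] := A_valid (ws := adversary t); rewrite ?size_adversary //.
  by move=> i r _; apply: adversary_ge0.
by case/andP => /eqP -> ->.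
Qed.

Lemma legal_alg_out t : (t < m)%N -> legal_update k (alg_out t) (alg_out t.+1).
Proof.
move=> lt_tm; have [||_ legal] := A_valid (ws := adversary t.+1).
- by rewrite size_adversary.
- by move=> i r _; apply: adversary_ge0.
- exact: legal.
Qed.

Lemma alg_out_mono t t' : (t <= t')%N -> (t' <= m)%N ->
  {subset alg_out t <= alg_out t'}.
Proof.
elim: t' => [|t' IHt']; first by rewrite leqn0 => /eqP -> _ r.
rewrite leq_eqVlt => /orP[/eqP -> _ r //|]; rewrite ltnS => le_tt' lt_t'm r r_t.
have [_ keep] := legal_alg_out lt_t'm; apply: keep.
exact: IHt' (ltnW lt_t'm) _ r_t.
Qed.

Lemma new_vertexP t : (t < m)%N -> nv t \in alg_out t.+1 /\ nv t \notin alg_out t.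
Proof.
move=> lt_tm; have [size1 uniq1] := alg_out_left_perfect lt_tm.
have [size0 _] := alg_out_left_perfect (ltnW lt_tm).
suff : nv t \in [seq r <- alg_out t.+1 | r \notin alg_out t].
  by rewrite mem_filter => /andP[].
rewrite mem_nth // lt0n size_eq0 -has_filter; apply: contraT => /hasPn no_new.
have := uniq_leq_size uniq1 (fun r r1 => negbNE (no_new r r1)).
by rewrite size1 size0 ltnn.
Qed.

Lemma new_vertex_inj j j' : (j < m)%N -> (j' < m)%N -> nv j = nv j' -> j = j'.
Proof.
wlog le_jj' : j j' / (j <= j')%N.
  move=> wlog lt_jm lt_j'm eq_nv; case: (leqP j j') => [le_jj'|/ltnW le_j'j].
    exact: wlog.
  exact/esym/wlog.
move=> lt_jm lt_j'm eq_nv; apply/eqP; rewrite eqn_leq le_jj' leqNgt; apply/negP => lt_jj'.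
have [new_j _] := new_vertexP lt_jm; have [_ old_j'] := new_vertexP lt_j'm.
by rewrite -eq_nv (alg_out_mono lt_jj' (ltnW lt_j'm) new_j) in old_j'.
Qed.

Lemma demand_matched i r : (i <= m)%N -> demand alg_out i r -> r \in alg_out i.
Proof.
case: i => [|[|i]] // le_im.
have nv_in j : (j <= i.+1)%N -> nv j \in alg_out i.+2.
  move=> le_ji; have [new_j _] := new_vertexP (leq_ltn_trans le_ji le_im).
  exact: alg_out_mono new_j.
have le_half : (i./2.*2.+1 <= i.+1)%N by rewrite ltnS -{2}(odd_double_half i) leq_addl.
rewrite /demand; case: (odd i) => /=.
  by move/eqP ->; case: ifP => _; apply: nv_in; [|apply: ltnW].
by case/orP => /eqP ->; apply: nv_in; [apply: ltnW|].
Qed.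

Lemma partner_stable t i : (i < t)%N -> (t < m)%N ->
  demand alg_out i (nth d (alg_out t.+1) i) -> nth d (alg_out t.+1) i = nth d (alg_out t) i.
Proof.
move=> lt_it lt_tm demanded; apply/eqP/negPn/negP => moved.
have [size1 uniq1] := alg_out_left_perfect lt_tm.
have [size0 _] := alg_out_left_perfect (ltnW lt_tm).
have matched : nth d (alg_out t.+1) i \in alg_out t.
  apply: alg_out_mono (ltnW lt_it) (ltnW lt_tm) _ _.
  exact: demand_matched (ltnW (leq_trans lt_it (ltnW lt_tm))) demanded.
have [le_k _] := legal_alg_out lt_tm.
have size_up : size (alg_out t.+1) = (size (alg_out t)).+1 by rewrite size1 size0.
have lt_i0 : (i < size (alg_out t))%N by rewrite size0.
have six_le := six_le_num_reassign size_up uniq1 lt_i0 moved matched.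
by move: k_lt6; rewrite ltnNge (leq_trans six_le le_k).
Qed.

Definition served t i := demand alg_out i (nth d (alg_out t) i).

Lemma served_stable t j i : (i < j)%N -> (j <= t)%N -> (t <= m)%N ->
  served t i -> nth d (alg_out t) i = nth d (alg_out j) i.
Proof.
move=> lt_ij; elim: t => [|t IHt]; first by rewrite leqn0 => /eqP ->.
rewrite leq_eqVlt => /orP[/eqP -> //|]; rewrite ltnS => le_jt lt_tm.
rewrite /served; move=> /[dup] /partner_stable stable.
rewrite stable ?(leq_trans lt_ij le_jt) // => served_t.
exact: IHt (ltnW lt_tm) served_t.
Qed.

Lemma served_pair t n : (n.*2.+4 <= t)%N -> (t <= m)%N ->
  ~~ (served t n.*2.+2 && served t n.*2.+3).
Proof.
move=> le_4t le_tm; apply/negP => /andP[served2 served3].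
have [size4 uniq4] := alg_out_left_perfect (leq_trans le_4t le_tm).
have at3 := served_stable (ltnSn _) (ltnW le_4t) le_tm served2.
have at4 := served_stable (ltnW (ltnSn _)) le_4t le_tm served2.
have at4' := served_stable (ltnSn _) le_4t le_tm served3.
move: served2 served3; rewrite /served demand_even demand_odd at3 at4'.
set h := nth d (alg_out n.*2.+3) n.*2.+2 => h_demanded.
have -> : (if h == nv n.*2.+1 then nv n.*2.+1 else nv n.*2) = h.
  case: eqP => [-> // | ne]; case/orP: h_demanded => /eqP eq_h; first by rewrite eq_h.
  by case: ne.
rewrite /h -at3 at4 nth_uniq ?size4 // => /eqP; lia.
Qed.

Lemma sum_served_le N : (N.*2.+2 <= m)%N -> (\sum_(i < N.*2.+2) served N.*2.+2 i <= N)%N.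
Proof.
move=> le_Tm; rewrite -(big_mkord xpredT (fun i => nat_of_bool (served _ i))).
rewrite -doubleS big_nat_pairs big_nat_recl // [served _ 0.*2]/= [served _ 0.*2.+1]/= !add0n.
rewrite big_mkord -[X in (_ <= X)%N](card_ord N) -sum1_card.
apply: leq_sum => n _; rewrite !doubleS.
have le_pair_T : (n.*2.+4 <= N.*2.+2)%N by rewrite !ltnS -doubleS leq_double.
have := served_pair le_pair_T le_Tm.
by case: (served _ n.*2.+2); case: (served _ n.*2.+3).
Qed.

Lemma mweight_adversary_le N : (N.*2.+2 <= m)%N ->
  mweight (adversary N.*2.+2) (alg_out N.*2.+2) <= N%:R.
Proof.
move=> le_Tm; have [size_T _] := alg_out_left_perfect le_Tm.
rewrite (mweightE d) ?size_adversary //.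
rewrite (eq_bigr (fun i : 'I_(N.*2.+2) => (served N.*2.+2 i)%:R)) => [|i _].
  by rewrite -natr_sum ler_nat sum_served_le.
by rewrite nth_adversary.
Qed.

Definition took_second n := nth d (alg_out n.*2.+3) n.*2.+2 == nv n.*2.+1.

(* The optimum matches pair n to its two vertices in the order meeting both
   demands, and the two dummy vertices to the last two new vertices. *)
Definition opt_index N i : nat :=
  if i is i'.+2 then (i'./2.*2 + (odd i' == took_second i'./2))%N else (i + N.*2)%N.

Lemma opt_index_lt N i : (i < N.*2.+2)%N -> (opt_index N i < N.*2.+2)%N.
Proof. by case: i => [|[|i]] //=; case: (_ == _); lia. Qed.

Lemma opt_index_inj N i j : (i < N.*2.+2)%N -> (j < N.*2.+2)%N ->
  opt_index N i = opt_index N j -> i = j.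
Proof.
case: i => [|[|i]]; case: j => [|[|j]] //=; try lia; try by case: (_ == _); lia.
case: (i./2 =P j./2) => [eq_half|]; last by case: (_ == _); case: (_ == _); lia.
rewrite eq_half; case: took_second; case: (odd i =P true); case: (odd j =P true); lia.
Qed.

Lemma demand_opt_index N i : demand alg_out i.+2 (nv (opt_index N i.+2)).
Proof.
rewrite [opt_index _ _]/= -(odd_double_half i) oddD odd_double addbF half_bit_double.
case: (odd i); rewrite ?add0n ?add1n.
  by rewrite demand_odd -/(took_second _); case: took_second; rewrite /= ?addn0 ?addn1 eqxx.
by rewrite demand_even; case: took_second; rewrite /= ?addn0 ?addn1 eqxx ?orbT.
Qed.

Lemma OPT_adversary_ge N : (N.*2.+2 <= m)%N -> (N.*2)%:R <= OPT (adversary N.*2.+2).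
Proof.
move=> le_Tm; set g := [seq nv (opt_index N i) | i <- iota 0 N.*2.+2].
have size_g : size g = size (adversary N.*2.+2) by rewrite size_map size_iota size_adversary.
have uniq_g : uniq g.
  rewrite map_inj_in_uniq ?iota_uniq // => i j; rewrite !mem_iota !add0n => lt_i lt_j.
  move/new_vertex_inj => /(_ (leq_trans (opt_index_lt lt_i) le_Tm)).
  by move/(_ (leq_trans (opt_index_lt lt_j) le_Tm)); apply: opt_index_inj.
apply: le_trans (le_OPT d size_g uniq_g); rewrite size_adversary !big_ord_recl.
rewrite ler_wpDl ?adversary_ge0 // ler_wpDl ?adversary_ge0 //.
rewrite -[in X in X <= _](card_ord N.*2) -sumr_const; apply: ler_sum => i _.
rewrite nth_adversary // (nth_map 0%N) ?size_iota // nth_iota // add0n.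
by rewrite demand_opt_index.
Qed.

End Adversary.

Theorem theorem4 (R : realType) (eps : R) : 0 < eps ->
  forall A : online_alg R, valid_alg 4 A ->
  forall c : R, 0 <= c ->
  exists (m : nat) (ws : seq ('I_m -> R)),
    [/\ (size ws <= m)%N, zero_one_weights ws &
        mweight ws (A m ws) < (2^-1 + eps) * OPT ws - c].
Proof.
move=> eps_gt0 A A_valid c c_ge0.
pose N := (Num.truncn (c / eps)).+1; pose d : 'I_(N.*2.+2) := ord0.
exists N.*2.+2, (adversary A d N.*2.+2); split.
- by rewrite size_adversary.
- exact: adversary_zero_one.
have alg_le := mweight_adversary_le d (isT : (4 < 6)%N) A_valid (leqnn _).
have opt_ge := OPT_adversary_ge d (isT : (4 < 6)%N) A_valid (leqnn _).
have c_lt : c < N%:R * eps by rewrite -ltr_pdivrMr // truncnS_gt.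
rewrite /alg_out in alg_le; rewrite -[in X in X <= _]mul2n natrM in opt_ge.
nra.
Qed.
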